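(* Let $\bar P=(P,P^* )\in\bar M$ and let $(x_n)$ be a sequence in $M$ such that $P=\lim I^-(x_n)$ and $P^*=\lim I^+(x_n)$. Then $\Phi(x_n)$ converges to $\bar P$ in $(\bar M,\bar{\mathcal T})$.
   Context: Let $M$ be a strongly causal spacetime (a time-oriented Lorentzian manifold in which every point has a neighbourhood that no non-spacelike curve enters more than once). $I^\pm(p)$ denotes the chronological future/past of $p\in M$, and $I^\pm(S)=\bigcup_{s\in S}I^\pm(s)$. A past-set is a set $I^-(S)$ with $S\subset M$ (the empty set included). An IP is a nonempty past-set that is not the union of two proper subsets which are past-sets. IFs are defined dually. For an IP $P$, $f(P)=I^+(\{x:P\subset I^-(x)\})$. For an IF $P^*$, $p(P^* )=I^-(\{x:P^*\subset I^+(x)\})$. $R_{pf}$ is the set of pairs $(P,Q^* )$ (with $P$ an IP and $Q^*$ an IF) such that both of the following hold: - $Q^*$ is a maximal IF (under inclusion) contained in $f(P)$; - $P$ is a maximal IP contained in $p(Q^* )$. $\bar M$ is the set of pairs $\bar P=(P,P^* )$ such that one of the following holds: - $(P,P^* )\in R_{pf}$; - $P=\emptyset$ and $P^*$ is an IF occurring in no pair of $R_{pf}$; - $P^*=\emptyset$ and $P$ is an IP occurring in no pair of $R_{pf}$. $\Phi(p)=(I^-(p),I^+(p))$ is an injection $M\to\bar M$. Limits of sets: for past-sets $P_n$ and $Q$, $Q=\lim P_n$ means both of the following: - (i) each $x\in Q$ lies in $P_n$ for all sufficiently large $n$; - (ii) for each $x\in M$ with $I^-(x)\not\subset Q$, one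 has $I^-(x)\not\subset P_n$ for all sufficiently large $n$. Limits of future-sets are defined dually, with $I^+$ in place of $I^-$. For $\bar S\subset\bar M$ define: - $L^+_{IF}(\bar S)=\{\bar Q:Q^*\ne\emptyset,\ Q^*\subset\bigcup_{\bar R\in\bar S}R^*\}$; - $L^-_{IP}(\bar S)=\{\bar Q:Q\neq\emptyset,\ Q\subset\bigcup_{\bar R\in\bar S}R\}$; - $Cl_{FB}(\bar S)=\bar S\cup\{\bar Q:Q^*=\emptyset,\ Q=\lim R_n\text{ for some sequence }\bar R_n\in\bar S\}$; - $Cl_{PB}(\bar S)=\bar S\cup\{\bar Q:Q=\emptyset,\ Q^*=\lim R^*_n\text{ for some sequence }\bar R_n\in\bar S\}$; - $L^+(\bar S)=Cl_{FB}[\bar S\cup L^+_{IF}(\bar S)]$; - $L^-(\bar S)=Cl_{PB}[\bar S\cup L^-_{IP}(\bar S)]$. $\bar{\mathcal T}$ is the coarsest topology on $\bar M$ in which $\bar M\setminus L^\pm(\bar S)$ are open for every $\bar S\subset\bar M$. *)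

From mathcomp Require Import all_boot.
From mathcomp Require Import boolp classical_sets.
Set Implicit Arguments. Unset Strict Implicit. Unset Printing Implicit Defensive.
Local Open Scope classical_set_scope.

(* The spacetime M is represented by its carrier and its chronological
   relation  chr x y  <->  x << y  (y lies in I^+(x)). *)
Section CBoundary.
Variables (M : Type) (chr : M -> M -> Prop).

Definition Ifut (p : M) : set M := [set y | chr p y].
Definition Ipast (p : M) : set M := [set y | chr y p].
Definition IfutS (S : set M) : set M := \bigcup_(s in S) Ifut s.
Definition IpastS (S : set M) : set M := \bigcup_(s in S) Ipast s.

Definition past_set (A : set M) : Prop := exists S, A = IpastS S.
Definition future_set (A : set M) : Prop := exists S, A = IfutS S.

Definition IP (P : set M) : Prop :=
  P !=set0 /\ past_set P /\
  ~ (exists A B, past_set A /\ past_set B /\ A `<` P /\ B `<` P /\ P = A `|` B).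
Definition IF (P : set M) : Prop :=
  P !=set0 /\ future_set P /\
  ~ (exists A B, future_set A /\ future_set B /\ A `<` P /\ B `<` P /\ P = A `|` B).

Definition fP (P : set M) : set M := IfutS [set x | P `<=` Ipast x].
Definition pF (F : set M) : set M := IpastS [set x | F `<=` Ifut x].

Definition maximal_IF_in (Q A : set M) : Prop :=
  IF Q /\ Q `<=` A /\ (forall Q', IF Q' -> Q' `<=` A -> Q `<=` Q' -> Q' = Q).
Definition maximal_IP_in (P A : set M) : Prop :=
  IP P /\ P `<=` A /\ (forall P', IP P' -> P' `<=` A -> P `<=` P' -> P' = P).

Definition Rpf (P Q : set M) : Prop :=
  IP P /\ IF Q /\ maximal_IF_in Q (fP P) /\ maximal_IP_in P (pF Q).

Definition in_Mbar (PP : set M * set M) : Prop :=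
  let: (P, Q) := PP in
  Rpf P Q
  \/ (P = set0 /\ IF Q /\ ~ (exists P', Rpf P' Q))
  \/ (Q = set0 /\ IP P /\ ~ (exists Q', Rpf P Q')).

Definition Mbar : set (set M * set M) := [set PP | in_Mbar PP].

Definition Phi (p : M) : set M * set M := (Ipast p, Ifut p).

Definition lim_past (Q : set M) (Pn : nat -> set M) : Prop :=
  (forall x, Q x -> exists N, forall n, (N <= n)%N -> Pn n x) /\
  (forall x, ~ (Ipast x `<=` Q) ->
     exists N, forall n, (N <= n)%N -> ~ (Ipast x `<=` Pn n)).
Definition lim_fut (Q : set M) (Pn : nat -> set M) : Prop :=
  (forall x, Q x -> exists N, forall n, (N <= n)%N -> Pn n x) /\
  (forall x, ~ (Ifut x `<=` Q) ->
     exists N, forall n, (N <= n)%N -> ~ (Ifut x `<=` Pn n)).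

Definition LIF (S : set (set M * set M)) : set (set M * set M) :=
  [set QQ | Mbar QQ /\ QQ.2 !=set0 /\ QQ.2 `<=` \bigcup_(RR in S) RR.2].
Definition LIP (S : set (set M * set M)) : set (set M * set M) :=
  [set QQ | Mbar QQ /\ QQ.1 !=set0 /\ QQ.1 `<=` \bigcup_(RR in S) RR.1].
Definition ClFB (S : set (set M * set M)) : set (set M * set M) :=
  S `|` [set QQ | Mbar QQ /\ QQ.2 = set0 /\
           exists RR : nat -> set M * set M,
             (forall n, S (RR n)) /\ lim_past QQ.1 (fun n => (RR n).1)].
Definition ClPB (S : set (set M * set M)) : set (set M * set M) :=
  S `|` [set QQ | Mbar QQ /\ QQ.1 = set0 /\
           exists RR : nat -> set M * set M,
             (forall n, S (RR n)) /\ lim_fut QQ.2 (fun n => (RR n).2)].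
Definition Lplus (S : set (set M * set M)) := ClFB (S `|` LIF S).
Definition Lminus (S : set (set M * set M)) := ClPB (S `|` LIP S).

(* The topology \bar T on \bar M: the coarsest topology in which every
   \bar M \ L^{+-}(S), S ⊂ \bar M, is open, i.e. the topology generated by
   these sets as a subbasis (open sets = subsets of \bar M). *)
Inductive Topen : set (set M * set M) -> Prop :=
  | Topen_Lplus S : S `<=` Mbar -> Topen (Mbar `\` Lplus S)
  | Topen_Lminus S : S `<=` Mbar -> Topen (Mbar `\` Lminus S)
  | Topen_full : Topen Mbar
  | Topen_inter U V : Topen U -> Topen V -> Topen (U `&` V)
  | Topen_union (I : Type) (F : I -> set (set M * set M)) :
      (forall i, Topen (F i)) -> Topen (\bigcup_(i in [set: I]) F i).

Definition Tconverges (u : nat -> set M * set M) (l : set M * set M) : Prop :=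
  forall U, Topen U -> U l -> exists N, forall n, (N <= n)%N -> U (u n).

End CBoundary.

Definition strongly_causal_chronology (M : Type) (chr : M -> M -> Prop) : Prop :=
  (forall x y z, chr x y -> chr y z -> chr x z) /\
  (forall x, ~ chr x x) /\
  (forall x z, chr x z -> exists y, chr x y /\ chr y z) /\
  (forall x, exists y, chr x y) /\ (forall x, exists y, chr y x) /\
  (forall x y, Ipast chr x = Ipast chr y -> x = y) /\
  (forall x y, Ifut chr x = Ifut chr y -> x = y) /\
  (forall p, in_Mbar chr (Phi chr p)).

From mathcomp Require Import all_boot.
From mathcomp Require Import boolp classical_sets.
Set Implicit Arguments. Unset Strict Implicit.
Local Open Scope classical_set_scope.

(* Since T is generated by the complements of the sets L^+(S) and L^-(S), it
   suffices to show that Phi(x_n) eventually leaves every such set missing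
   (P, P* ).  Suppose Phi(x_n) lies in L^+(S) for infinitely many n.  As
   I^+(x_n) is nonempty, the closure part of L^+ never applies to Phi(x_n), so
   these Phi(x_n) lie in S u L^+_IF(S) and I^+(x_n) is covered by the future
   components of S.  If P* is nonempty, every point of P* eventually lies in
   I^+(x_n), hence P* is covered as well and (P, P* ) is in L^+_IF(S).  If
   P* is empty, the subsequence still has I^-(x_n) -> P, so (P, P* ) is added
   by the future-boundary closure.  L^-(S) is dual. *)

Definition eventually (p : nat -> Prop) : Prop :=
  exists N, forall n, (N <= n)%N -> p n.

Lemma eventuallyT (p : nat -> Prop) : (forall n, p n) -> eventually p.
Proof. by move=> hp; exists 0%N. Qed.

Lemma eventuallyI (p q : nat -> Prop) :
  eventually p -> eventually q -> eventually (fun n => p n /\ q n).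
Proof.
move=> [Np hp] [Nq hq]; exists (maxn Np Nq) => n hn.
by split; [apply: hp | apply: hq]; apply: leq_trans hn; rewrite ?leq_maxl ?leq_maxr.
Qed.

Lemma eventually_subseq (p : nat -> Prop) (g : nat -> nat) :
  (forall k, (k <= g k)%N) -> eventually p -> eventually (p \o g).
Proof. by move=> hg [N hN]; exists N => k hk; apply/hN/(leq_trans hk). Qed.

Lemma frequently_subseq (p : nat -> Prop) : ~ eventually (fun n => ~ p n) ->
  exists g : nat -> nat, (forall k, (k <= g k)%N) /\ (forall k, p (g k)).
Proof.
move=> freq.
have hp N : exists n, (N <= n)%N /\ p n.
  by apply: contra_notP freq => hN; exists N => n hn pn; apply: hN; exists n.
exists (fun N => sval (cid (hp N))).
by split=> k; case: (cid (hp k)) => /= n [].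
Qed.

Lemma frequently_eventually (p q : nat -> Prop) :
  ~ eventually (fun n => ~ p n) -> eventually q -> exists n, p n /\ q n.
Proof.
move=> /frequently_subseq[g [hg pg]] [N hN].
by exists (g N); split; [apply: pg | apply/hN/hg].
Qed.

Lemma lim_past_subseq (M : Type) (chr : M -> M -> Prop) (Q : set M)
    (Pn : nat -> set M) (g : nat -> nat) :
  (forall k, (k <= g k)%N) -> lim_past chr Q Pn -> lim_past chr Q (Pn \o g).
Proof.
move=> hg [hin hout]; split=> y hy.
- exact: eventually_subseq (hin y hy).
- exact: eventually_subseq (hout y hy).
Qed.

Lemma lim_fut_subseq (M : Type) (chr : M -> M -> Prop) (Q : set M)
    (Pn : nat -> set M) (g : nat -> nat) :
  (forall k, (k <= g k)%N) -> lim_fut chr Q Pn -> lim_fut chr Q (Pn \o g).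
(* lim_fut for chr is, by conversion, lim_past for the reversed relation. *)
Proof. exact: (@lim_past_subseq M (fun a b => chr b a)). Qed.

Section Chronology.
Variables (M : Type) (chr : M -> M -> Prop).

Lemma ClFB_future_nonempty T QQ : QQ.2 !=set0 -> ClFB chr T QQ -> T QQ.
Proof. by move=> [y Qy] [//|[_ [Q0 _]]]; move: Qy; rewrite Q0. Qed.

Lemma ClPB_past_nonempty T QQ : QQ.1 !=set0 -> ClPB chr T QQ -> T QQ.
Proof. by move=> [y Qy] [//|[_ [Q0 _]]]; move: Qy; rewrite Q0. Qed.

Lemma LIF_cover S QQ : (S `|` LIF chr S) QQ -> QQ.2 `<=` \bigcup_(RR in S) RR.2.
Proof. by move=> [SQ y Qy | [_ [_ Qcover]]] //; exists QQ. Qed.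

Lemma LIP_cover S QQ : (S `|` LIP chr S) QQ -> QQ.1 `<=` \bigcup_(RR in S) RR.1.
Proof. by move=> [SQ y Qy | [_ [_ Qcover]]] //; exists QQ. Qed.

Lemma Tconverges_subbasis (u : nat -> set M * set M) (l : set M * set M) :
  (forall n, Mbar chr (u n)) ->
  (forall S, S `<=` Mbar chr -> ~ Lplus chr S l ->
     eventually (fun n => ~ Lplus chr S (u n))) ->
  (forall S, S `<=` Mbar chr -> ~ Lminus chr S l ->
     eventually (fun n => ~ Lminus chr S (u n))) ->
  Tconverges chr u l.
Proof.
move=> uM hplus hminus U.
elim=> {U} [S SM [_ lS] | S SM [_ lS] | _ | U V _ hU _ hV [Ul Vl] | I F _ hF [i _ Fil]].
- exact: eventuallyI (eventuallyT uM) (hplus S SM lS).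
- exact: eventuallyI (eventuallyT uM) (hminus S SM lS).
- exact: eventuallyT.
- exact: eventuallyI (hU Ul) (hV Vl).
- by have [N hN] := hF i Fil; exists N => n hn; exists i => //; apply: hN.
Qed.

Variables (P Pst : set M) (x : nat -> M).
Hypothesis hMb : Mbar chr (P, Pst).
Hypothesis hlimP : lim_past chr P (fun n => Ipast chr (x n)).
Hypothesis hlimF : lim_fut chr Pst (fun n => Ifut chr (x n)).

Lemma eventually_notin_Lplus S : (forall y, exists z, chr y z) ->
  ~ Lplus chr S (P, Pst) -> eventually (fun n => ~ Lplus chr S (Phi chr (x n))).
Proof.
move=> hfut; apply: contra_notP => freq.
have inS n : Lplus chr S (Phi chr (x n)) -> (S `|` LIF chr S) (Phi chr (x n)).
  by apply: ClFB_future_nonempty; exact: hfut.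
case: (pselect (Pst = set0)) => [Pst0 | /eqP/set0P Pst_ne].
- have [g [hg Sg]] := frequently_subseq freq.
  right; split=> //; split=> //.
  exists (fun k => Phi chr (x (g k))); split; first by move=> k; apply/inS/Sg.
  exact: lim_past_subseq hg hlimP.
- left; right; split=> //; split=> // y Psty.
  have [n [Sn yn]] := frequently_eventually freq (hlimF.1 y Psty).
  exact: LIF_cover (inS n Sn) _ yn.
Qed.

Lemma eventually_notin_Lminus S : (forall y, exists z, chr z y) ->
  ~ Lminus chr S (P, Pst) -> eventually (fun n => ~ Lminus chr S (Phi chr (x n))).
Proof.
move=> hpast; apply: contra_notP => freq.
have inS n : Lminus chr S (Phi chr (x n)) -> (S `|` LIP chr S) (Phi chr (x n)).
  by apply: ClPB_past_nonempty; exact: hpast.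
case: (pselect (P = set0)) => [P0 | /eqP/set0P P_ne].
- have [g [hg Sg]] := frequently_subseq freq.
  right; split=> //; split=> //.
  exists (fun k => Phi chr (x (g k))); split; first by move=> k; apply/inS/Sg.
  exact: lim_fut_subseq hg hlimF.
- left; right; split=> //; split=> // y Py.
  have [n [Sn yn]] := frequently_eventually freq (hlimP.1 y Py).
  exact: LIP_cover (inS n Sn) _ yn.
Qed.

End Chronology.

Theorem theorem8 (M : Type) (chr : M -> M -> Prop)
  (hM : strongly_causal_chronology chr)
  (P Pst : set M) (hP : in_Mbar chr (P, Pst)) (x : nat -> M)
  (hlimP : lim_past chr P (fun n => Ipast chr (x n)))
  (hlimF : lim_fut chr Pst (fun n => Ifut chr (x n))) :
  Tconverges chr (fun n => Phi chr (x n)) (P, Pst).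
Proof.
have [_ [_ [_ [hfut [hpast [_ [_ PhiM]]]]]]] := hM.
apply: Tconverges_subbasis => [n | S _ | S _]; first exact: PhiM.
- exact: eventually_notin_Lplus.
- exact: eventually_notin_Lminus.
Qed.
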